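(* Let $k$ be a field of characteristic different from $2$ containing a square root of $-1$. Let $G=\mathrm{SL}_3\rtimes\mu_2$ with $-1\in\mu_2$ acting by $A\mapsto(A^{\mathrm{T}})^{-1}$, acting on $V\oplus V$ ($V=k^3$) by $A\cdot(v,w)=(Av,(A^{\mathrm{T}})^{-1}w)$ and $(\mathrm{id},-1)\cdot(v,w)=(w,v)$; let $\mu_2$ act on $V\oplus V$ by scaling, and let $H\subset G\times\mu_2$ be the stabilizer of $(e_1,e_1)$. Then $H$ is isomorphic to the semidirect product $\mathrm{SL}_2\rtimes(\mu_2\times\mu_2)$, where the homomorphism $\mu_2\times\mu_2\to\mathrm{Aut}(\mathrm{SL}_2)$ sends $(-1,1)$ to $A\mapsto(A^{\mathrm{T}})^{-1}$ and $(1,-1)$ to the automorphism $\begin{pmatrix}a&b\\c&d\end{pmatrix}\mapsto\begin{pmatrix}a&-b\\-c&d\end{pmatrix}$.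
   Context: $e_1=(1,0,0)\in k^3$. *)

From HB Require Import structures.
From mathcomp Require Import all_boot all_order all_algebra.
Set Implicit Arguments. Unset Strict Implicit. Unset Printing Implicit Defensive.
Import Order.TTheory GRing.Theory Num.Theory.
Local Open Scope ring_scope.

(* Group schemes over a field k are described by their functors of points on
   commutative k-algebras R (objects of comAlgType k). *)

Section Defs.
Variable k : fieldType.
Variable R : comAlgType k.

Definition inmu2 (e : R) : bool := e ^+ 2 == 1.

Definition inSL n (A : 'M[R]_n) : bool := \det A == 1.

(* (A^T)^{-1} for A of determinant 1 : inverse of A is its adjugate. *)
Definition tinv n (A : 'M[R]_n) : 'M[R]_n := (\adj A)^T.

(* for e in mu_2(R) (2 invertible in k): the idempotents (1+e)/2, (1-e)/2 *)
Definition pplus (e : R) : R := (2%:R : k)^-1 *: (1 + e).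
Definition pminus (e : R) : R := (2%:R : k)^-1 *: (1 - e).

(* action of e in mu_2 on SL_3 (or SL_2) : -1 acts by A |-> (A^T)^{-1} *)
Definition twist n (e : R) (A : 'M[R]_n) : 'M[R]_n :=
  pplus e *: A + pminus e *: tinv A.

Definition flip (B : 'M[R]_2) : 'M[R]_2 :=
  \matrix_(i, j) (if i == j then B i j else - B i j).
Definition twist2 (f : R) (B : 'M[R]_2) : 'M[R]_2 :=
  pplus f *: B + pminus f *: flip B.

Definition inGm (x : 'M[R]_3 * R * R) : bool :=
  [&& inSL x.1.1, inmu2 x.1.2 & inmu2 x.2].

Definition mulGm (x y : 'M[R]_3 * R * R) : 'M[R]_3 * R * R :=
  (x.1.1 *m twist x.1.2 y.1.1, x.1.2 * y.1.2, x.2 * y.2).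

Definition swapv (e : R) (p : 'cV[R]_3 * 'cV[R]_3) : 'cV[R]_3 * 'cV[R]_3 :=
  (pplus e *: p.1 + pminus e *: p.2, pminus e *: p.1 + pplus e *: p.2).

Definition actGm (x : 'M[R]_3 * R * R) (p : 'cV[R]_3 * 'cV[R]_3)
  : 'cV[R]_3 * 'cV[R]_3 :=
  let q := swapv x.1.2 p in
  (x.2 *: (x.1.1 *m q.1), x.2 *: (tinv x.1.1 *m q.2)).

Definition e1 : 'cV[R]_3 := \col_i (if i == 0 then 1 else 0).

Definition inH (x : 'M[R]_3 * R * R) : bool :=
  inGm x && (actGm x (e1, e1) == (e1, e1)).

Definition inK (x : 'M[R]_2 * R * R) : bool :=
  [&& inSL x.1.1, inmu2 x.1.2 & inmu2 x.2].

Definition mulK (x y : 'M[R]_2 * R * R) : 'M[R]_2 * R * R :=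
  (x.1.1 *m twist x.1.2 (twist2 x.2 y.1.1), x.1.2 * y.1.2, x.2 * y.2).

End Defs.

Definition mapT (k : fieldType) (R S : comAlgType k) (f : {lrmorphism R -> S}) n
  (x : 'M[R]_n * R * R) : 'M[S]_n * S * S :=
  (map_mx f x.1.1, f x.1.2, f x.2).

From HB Require Import structures.
From mathcomp Require Import all_boot all_order all_algebra.
Import GRing.Theory.
Local Open Scope ring_scope.
Set Implicit Arguments. Unset Strict Implicit.

(* Since e swaps the two copies of V, it fixes (e_1, e_1); so (A, e, l) lies in
   H iff A e_1 = l e_1 and A^T e_1 = l e_1, i.e. A = diag(l, A') is block
   diagonal, and then det A' = l.  Writing A' = B diag(1, l) with B in SL_2,
   the map (A, e, l) |-> (B, e, l) is the isomorphism: (A^T)^-1 respects the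
   block decomposition, and conjugation by diag(1, -1) is exactly the
   automorphism [[a, b], [c, d]] |-> [[a, -b], [-c, d]]. *)

Section Matrices.
Variables (k : fieldType) (R : comAlgType k).

Lemma mulmx_tr_tinv n (A : 'M[R]_n) : \det A = 1 -> A^T *m tinv A = 1.
Proof. by move=> dA; rewrite /tinv -trmx_mul mul_adj_mx dA tr_scalar_mx. Qed.

Lemma tinv_unique n (A M : 'M[R]_n) : \det A = 1 -> A^T *m M = 1 -> tinv A = M.
Proof.
move=> dA AM; rewrite /tinv -[RHS]mul1mx -tr_scalar_mx -dA -mul_mx_adj.
by rewrite trmx_mul -mulmxA AM mulmx1.
Qed.

Definition diag1 (l : R) : 'M[R]_2 := diag_mx (\row_(i < 2) if i == 0 then 1 else l).

Lemma tr_diag1 l : (diag1 l)^T = diag1 l.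
Proof. exact: tr_diag_mx. Qed.

Lemma det_diag1 l : \det (diag1 l) = l.
Proof. by rewrite det_diag big_ord_recl big_ord1 !mxE mul1r. Qed.

Lemma mul_diag1 a b : diag1 a *m diag1 b = diag1 (a * b).
Proof.
rewrite mulmx_diag; congr diag_mx; apply/rowP => i.
by rewrite !mxE; case: ifP; rewrite ?mulr1.
Qed.

Lemma diag1K l : l ^+ 2 = 1 -> diag1 l *m diag1 l = 1.
Proof.
move=> l2; rewrite mul_diag1 -expr2 l2.
by apply/matrixP => i j; rewrite !mxE if_same.
Qed.

Lemma tinv_conj_diag1 l B : l ^+ 2 = 1 -> \det B = 1 ->
  tinv (diag1 l *m B *m diag1 l) = diag1 l *m tinv B *m diag1 l.
Proof.
move=> l2 dB; apply: tinv_unique; first by rewrite !det_mulmx dB det_diag1 mulr1 -expr2.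
rewrite !trmx_mul tr_diag1 !mulmxA -(mulmxA _ (diag1 l) (diag1 l)) diag1K // mulmx1.
by rewrite -(mulmxA _ _ (tinv B)) mulmx_tr_tinv // mulmx1 diag1K.
Qed.

Definition blkdiag (l : R) (M : 'M[R]_2) : 'M[R]_3 := block_mx (l%:M : 'M_1) 0 0 M.

Lemma det_blkdiag l M : \det (blkdiag l M) = l * \det M.
Proof. by rewrite /blkdiag (det_ublock (l%:M : 'M_1)) det_scalar1. Qed.

Lemma mul_blkdiag a b M N : blkdiag a M *m blkdiag b N = blkdiag (a * b) (M *m N).
Proof.
rewrite /blkdiag (mulmx_block (a%:M : 'M_1) 0 0 M (b%:M : 'M_1) 0 0 N).
by rewrite !mul0mx !mulmx0 !addr0 !add0r -scalar_mxM.
Qed.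

Lemma tr_blkdiag l M : (blkdiag l M)^T = blkdiag l M^T.
Proof. by rewrite /blkdiag (tr_block_mx (l%:M : 'M_1)) tr_scalar_mx !trmx0. Qed.

Lemma scale_blkdiag a l M : a *: blkdiag l M = blkdiag (a * l) (a *: M).
Proof.
by rewrite /blkdiag (scale_block_mx a (l%:M : 'M_1)) scale_scalar_mx !scaler0.
Qed.

Lemma add_blkdiag a b M N : blkdiag a M + blkdiag b N = blkdiag (a + b) (M + N).
Proof. by rewrite /blkdiag (add_block_mx (a%:M : 'M_1)) !addr0 raddfD. Qed.

Lemma blkdiag1 : blkdiag 1 1 = 1.
Proof. exact/esym/(@scalar_mx_block _ 1 2 1). Qed.

Lemma drsubmx_blkdiag l M : drsubmx (blkdiag l M : 'M_(1 + 2)) = M.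
Proof. exact: block_mxKdr. Qed.

Lemma e1_col_mx : (e1 R : 'cV_(1 + 2)) = col_mx 1 0.
Proof.
apply/colP => i; rewrite !mxE; case: splitP => j; rewrite !mxE ?ord1;
  by case: i => [[|i] ?].
Qed.

Lemma blkdiag_e1 l M : blkdiag l M *m e1 R = l *: e1 R.
Proof.
rewrite /blkdiag e1_col_mx (mul_block_col (l%:M : 'M_1)) !mul0mx mulmx0 !addr0.
by rewrite mulmx1 (scale_col_mx l (1 : 'cV_1)) scaler0 scale_scalar_mx mulr1.
Qed.

Lemma blkdiag_drsubmx l (A : 'M[R]_(1 + 2)) :
  A *m e1 R = l *: e1 R -> A^T *m e1 R = l *: e1 R -> A = blkdiag l (drsubmx A).
Proof.
have col_e1 (N : 'M[R]_(1 + 2)) : N *m e1 R = l *: e1 R ->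
    ulsubmx N = l%:M /\ dlsubmx N = 0.
  rewrite -{1}[N]submxK e1_col_mx mul_block_col !mulmx0 !addr0 !mulmx1.
  by rewrite (scale_col_mx l (1 : 'cV_1)) scaler0 scale_scalar_mx mulr1 => /eq_col_mx.
move=> /col_e1 [ul dl]; rewrite -{1}[A]submxK tr_block_mx => /col_e1 [_].
rewrite block_mxKdl -trmx0 => /trmx_inj ur.
by rewrite /blkdiag -ul -dl -ur submxK.
Qed.

Lemma tinv_blkdiag l B : l ^+ 2 = 1 -> \det B = 1 ->
  tinv (blkdiag l (B *m diag1 l)) = blkdiag l (tinv B *m diag1 l).
Proof.
move=> l2 dB; apply: tinv_unique.
  by rewrite det_blkdiag det_mulmx dB det_diag1 mul1r -expr2.
rewrite tr_blkdiag mul_blkdiag -expr2 l2 trmx_mul tr_diag1 -mulmxA.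
by rewrite (mulmxA _ (tinv B)) mulmx_tr_tinv // mul1mx diag1K // blkdiag1.
Qed.

End Matrices.

Section Isomorphism.
Variables (k : fieldType) (R : comAlgType k).
Hypothesis two_neq0 : (2%:R : k) != 0.

Lemma scale_half_mulr2 (v : R) : (2%:R : k)^-1 *: (v *+ 2) = v.
Proof. by rewrite -scalerMnr scalerMnl -mulr_natr mulVf // scale1r. Qed.

Lemma pplusDpminus (e : R) : pplus e + pminus e = 1.
Proof. by rewrite /pplus /pminus -scalerDr addrACA subrr addr0 scale_half_mulr2. Qed.

Lemma pplusBpminus (e : R) : pplus e - pminus e = e.
Proof.
by rewrite /pplus /pminus -scalerBr opprD opprK addrACA subrr add0r scale_half_mulr2.
Qed.

Lemma swapv_diag e (v : 'cV[R]_3) : swapv e (v, v) = (v, v).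
Proof. by rewrite /swapv /= -!scalerDl pplusDpminus addrC pplusDpminus scale1r. Qed.

Lemma twist2_diag1 l (B : 'M[R]_2) : l ^+ 2 = 1 -> twist2 l B = diag1 l *m B *m diag1 l.
Proof.
move=> l2; rewrite mul_diag_mx mul_mx_diag /twist2 /flip.
apply/matrixP => -[[|[|//]] ?] [[|[|//]] ?]; rewrite !mxE /=;
  rewrite ?mulrN -?mulrDl -?mulrBl ?pplusDpminus ?pplusBpminus ?mul1r ?mulr1 //.
- by rewrite mulrC.
- by rewrite mulrC mulrA -expr2 l2 mul1r.
Qed.

Lemma twist_conj_diag1 (e l : R) (B : 'M[R]_2) : l ^+ 2 = 1 -> \det B = 1 ->
  twist e (diag1 l *m B *m diag1 l) = diag1 l *m twist e B *m diag1 l.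
Proof.
move=> l2 dB; rewrite /twist tinv_conj_diag1 // mulmxDr mulmxDl.
by rewrite -!scalemxAr -!scalemxAl.
Qed.

Lemma twist_blkdiag (e l : R) (B : 'M[R]_2) : l ^+ 2 = 1 -> \det B = 1 ->
  twist e (blkdiag l (B *m diag1 l)) = blkdiag l (twist e B *m diag1 l).
Proof.
move=> l2 dB; rewrite /twist tinv_blkdiag // !scale_blkdiag add_blkdiag.
by rewrite -mulrDl pplusDpminus mul1r mulmxDl !scalemxAl.
Qed.

Definition H_of_K (y : 'M[R]_2 * R * R) : 'M[R]_3 * R * R :=
  (blkdiag y.2 (y.1.1 *m diag1 y.2), y.1.2, y.2).

Definition K_of_H (x : 'M[R]_3 * R * R) : 'M[R]_2 * R * R :=
  (drsubmx (x.1.1 : 'M_(1 + 2)) *m diag1 x.2, x.1.2, x.2).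

Lemma H_of_KK y : y.2 ^+ 2 = 1 -> K_of_H (H_of_K y) = y.
Proof.
by case: y => [[B e] l] /= l2; rewrite /K_of_H drsubmx_blkdiag -mulmxA diag1K ?mulmx1.
Qed.

Lemma actGm_e1 x :
  actGm x (e1 R, e1 R) = (x.2 *: (x.1.1 *m e1 R), x.2 *: (tinv x.1.1 *m e1 R)).
Proof. by rewrite /actGm swapv_diag. Qed.

Lemma inH_H_of_K y : inK y -> inH (H_of_K y).
Proof.
case: y => [[B e] l] /and3P [/eqP dB /eqP e2 /eqP l2].
rewrite /inH /inGm /inSL /inmu2 actGm_e1 /= tinv_blkdiag // !blkdiag_e1.
rewrite det_blkdiag det_mulmx dB det_diag1 mul1r scalerA -expr2 l2 e2 scale1r.
by rewrite !eqxx.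
Qed.

Lemma inH_image x : inH x -> exists2 y, inK y & x = H_of_K y.
Proof.
case: x => [[A e] l]; rewrite /inH /inGm /inSL /inmu2 actGm_e1 /=.
case/andP => /and3P [/eqP dA /eqP e2 /eqP l2] /eqP [Ae1 tAe1].
have unscale (v w : 'cV[R]_3) : l *: v = w -> v = l *: w.
  by move<-; rewrite scalerA -expr2 l2 scale1r.
have {}Ae1 := unscale _ _ Ae1.
have {}tAe1 : A^T *m e1 R = l *: e1 R.
  by rewrite -{1}tAe1 -scalemxAr mulmxA mulmx_tr_tinv // mul1mx.
have defA := blkdiag_drsubmx Ae1 tAe1.
set A' := drsubmx _ in defA.
have dA' : \det A' = l.
  by rewrite -[LHS]mul1r -l2 expr2 -mulrA -det_blkdiag -defA dA mulr1.
exists (A' *m diag1 l, e, l).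
  by rewrite /inK /inSL /inmu2 /= det_mulmx dA' det_diag1 -expr2 l2 e2 !eqxx.
by rewrite /H_of_K /= -mulmxA diag1K // mulmx1 -defA.
Qed.

Lemma H_of_K_mul y z : inK y -> inK z ->
  H_of_K (mulK y z) = mulGm (H_of_K y) (H_of_K z).
Proof.
case: y => [[B e] l] /and3P [_ _ /eqP l2].
case: z => [[C f] m] /and3P [/eqP dC _ /eqP m2].
rewrite /H_of_K /mulK /mulGm /= twist_blkdiag // mul_blkdiag.
by rewrite twist2_diag1 // twist_conj_diag1 // -!mulmxA mul_diag1 mulrA -expr2 l2 mul1r.
Qed.

End Isomorphism.

Lemma K_of_H_map (k : fieldType) (R S : comAlgType k) (f : {lrmorphism R -> S}) x :
  K_of_H (mapT f x) = mapT f (K_of_H x).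
Proof.
have map_diag1 (a : R) : map_mx f (diag1 a) = diag1 (f a).
  by apply/matrixP => i j; rewrite !mxE rmorphMn; case: ifP; rewrite ?rmorph1.
by case: x => [[A e] l]; rewrite /K_of_H /mapT /= map_mxM map_diag1 map_drsubmx.
Qed.

Theorem lemma3p6 (k : fieldType) (hchar : (2%:R : k) != 0)
    (sqrtm1 : k) (hsqrt : sqrtm1 ^+ 2 = -1) :
  exists phi : forall R : comAlgType k, 'M[R]_3 * R * R -> 'M[R]_2 * R * R,
    [/\ (forall (R : comAlgType k) x, inH x -> inK (phi R x)),
        (forall (R : comAlgType k) x y, inH x -> inH y ->
           phi R x = phi R y -> x = y),
        (forall (R : comAlgType k) y, inK y -> exists2 x, inH x & phi R x = y),
        (forall (R : comAlgType k) x y, inH x -> inH y ->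
           phi R (mulGm x y) = mulK (phi R x) (phi R y))
      & (forall (R S : comAlgType k) (f : {lrmorphism R -> S}) x, inH x ->
           phi S (mapT f x) = mapT f (phi R x))].
Proof.
have inK_mu2 (R : comAlgType k) (y : 'M[R]_2 * R * R) : inK y -> y.2 ^+ 2 = 1.
  by case/and3P=> _ _ /eqP.
exists (fun R => @K_of_H k R); split.
- by move=> R x /(inH_image hchar) [y Ky ->]; rewrite H_of_KK ?inK_mu2.
- move=> R x x' /(inH_image hchar) [y Ky ->] /(inH_image hchar) [y' Ky' ->].
  by rewrite !H_of_KK ?inK_mu2 // => ->.
- move=> R y Ky; exists (H_of_K y); first exact: inH_H_of_K.
  by rewrite H_of_KK ?inK_mu2.
- move=> R x x' /(inH_image hchar) [y Ky ->] /(inH_image hchar) [y' Ky' ->].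
  have mu2_yy' : (mulK y y').2 ^+ 2 = 1 by rewrite exprMn !inK_mu2 ?mul1r.
  by rewrite -H_of_K_mul // !H_of_KK // inK_mu2.
- by move=> R S f x _; apply: K_of_H_map.
Qed.
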